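(* Let $P,Q,R\in D$ be non-collinear and let $m\in\mathbb{Z}_{\ge0}$ be the number of triangles inscribed in $S^1$ and circumscribing $\triangle PQR$. Then $$m=\begin{cases}0 & \text{if } \delta(P,Q,R)<\Delta'(P,Q),\\ 1 & \text{if } \delta(P,Q,R)=\Delta'(P,Q),\\ 2 & \text{if } \delta(P,Q,R)>\Delta'(P,Q).\end{cases}$$
   Context: $D=\{(x,y)\in\mathbb{R}^2: x^2+y^2<1\}$ (Beltrami–Klein disk), $S^1$ its boundary circle. Let $D_P$ be the unit disk with Poincaré distance $d(P,Q)=\operatorname{arccosh}\left(1+\frac{2|P-Q|^2}{(1-|P|^2)(1-|Q|^2)}\right)$, and $G:D_P\to D$, $G(x,y)=\left(\frac{2x}{1+x^2+y^2},\frac{2y}{1+x^2+y^2}\right)$, with inverse $G^{-1}(x,y)=\left(\frac{x}{1+\sqrt{1-x^2-y^2}},\frac{y}{1+\sqrt{1-x^2-y^2}}\right)$. For $P,Q\in D$, $d'(P,Q):=d(G^{-1}(P),G^{-1}(Q))$; equivalently, if $v_1,v_2\in S^1$ are the endpoints of the chord through $P,Q$, $d'(P,Q)=\frac12\left|\log\frac{|v_1Q||v_2P|}{|v_1P||v_2Q|}\right|$. For $P\ne Q$, $\Delta'(P,Q):=\log\frac{e^{d'(P,Q)}+1}{e^{d'(P,Q)}-1}$. $\delta(P,Q,R)$ is the minimum of $d'(R,S)$ over points $S\in D$ on the straight line through $P$ and $Q$. A triangle inscribed in $S^1$ and circumscribing $\triangle PQR$ is a Euclidean triangle with three distinct vertices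 on $S^1$ such that $P$, $Q$, $R$ lie on three distinct sides of it (one point on each side). *)

From HB Require Import structures.
From mathcomp Require Import all_boot all_order all_algebra.
From mathcomp Require Import all_classical all_reals all_analysis.
Set Implicit Arguments. Unset Strict Implicit. Unset Printing Implicit Defensive.
Import Order.TTheory GRing.Theory Num.Theory.
Local Open Scope ring_scope.
Local Open Scope classical_set_scope.

Section Defs.
Variable R : realType.
Definition plane_pt := (R * R)%type.

Definition sqnorm (P : plane_pt) : R := P.1 ^+ 2 + P.2 ^+ 2.
Definition sqdist (P Q : plane_pt) : R := (P.1 - Q.1) ^+ 2 + (P.2 - Q.2) ^+ 2.

Definition inD (P : plane_pt) : Prop := sqnorm P < 1.
Definition onS1 (P : plane_pt) : Prop := sqnorm P = 1.

Definition arccosh (x : R) : R := ln (x + Num.sqrt (x ^+ 2 - 1)).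

Definition dP (P Q : plane_pt) : R :=
  arccosh (1 + 2 * sqdist P Q / ((1 - sqnorm P) * (1 - sqnorm Q))).

(* G^{-1} : Klein disk -> Poincare disk *)
Definition Ginv (P : plane_pt) : plane_pt :=
  (P.1 / (1 + Num.sqrt (1 - sqnorm P)), P.2 / (1 + Num.sqrt (1 - sqnorm P))).

Definition dK (P Q : plane_pt) : R := dP (Ginv P) (Ginv Q).

Definition DeltaK (P Q : plane_pt) : R :=
  ln ((expR (dK P Q) + 1) / (expR (dK P Q) - 1)).

Definition on_line (P Q S : plane_pt) : Prop :=
  exists t : R, S = (P.1 + t * (Q.1 - P.1), P.2 + t * (Q.2 - P.2)).

(* delta(P,Q,R0) : min of d'(R0,S) over S in D on the line PQ (taken as inf) *)
Definition deltaK (P Q R0 : plane_pt) : R :=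
  inf [set dK R0 S | S in [set S | inD S /\ on_line P Q S]].

Definition collinear (P Q S : plane_pt) : Prop :=
  exists a b c : R, (a != 0 \/ b != 0) /\
    a * P.1 + b * P.2 = c /\ a * Q.1 + b * Q.2 = c /\ a * S.1 + b * S.2 = c.

Definition on_segment (A B X : plane_pt) : Prop :=
  exists t : R, 0 <= t <= 1 /\
    X = ((1 - t) * A.1 + t * B.1, (1 - t) * A.2 + t * B.2).

(* The set of triangles (identified with their vertex sets) inscribed in S^1
   and circumscribing triangle PQR0: P, Q, R0 on three distinct sides. *)
Definition circ_inscribed_triangles (P Q R0 : plane_pt) : set (set plane_pt) :=
  [set T | exists A B C : plane_pt,
     [/\ onS1 A, onS1 B & onS1 C] /\ [/\ A <> B, B <> C & C <> A] /\
     T = [set A; B; C] /\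
     [/\ on_segment A B P, on_segment B C Q & on_segment C A R0]].
End Defs.

(* A circumscribing triangle ABC (P on AB, Q on BC, R0 on CA) is determined by its vertex A,
   which must be a fixed point of s_R0 o s_Q o s_P, where s_X maps a point of the circle to the
   other end of the chord through X.  In the rational parametrization of the circle each s_X is a
   projective linear map, so these fixed points are the points of the circle on a line, and their
   number (0, 1 or 2) is read off a discriminant equal to 4 (area2^2 - prod_X (1 - |X|^2)).
   On the hyperbolic side, lift Klein points to (x, y, 1) with the Minkowski form: cosh d' is
   the normalized form, delta is attained at the orthogonal projection of R0 on the plane of P and
   Q, and sinh^2 delta * sinh^2 d'(P, Q) = area2^2 / prod_X (1 - |X|^2).  Since
   Delta' = ln coth (d'/2) satisfies sinh Delta' * sinh d' = 1, comparing delta with Delta' is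
   comparing area2^2 with prod_X (1 - |X|^2). *)

From mathcomp Require Import all_boot all_order all_algebra.
From mathcomp Require Import all_classical all_reals all_analysis.
From mathcomp Require Import ring lra.
Import Order.TTheory GRing.Theory Num.Theory.
Set Implicit Arguments. Unset Strict Implicit. Unset Printing Implicit Defensive.
Local Open Scope ring_scope.
Local Open Scope classical_set_scope.
Local Open Scope card_scope.

Section Trichotomy.
Variable R : realType.

Definition cmp_nat (x y : R) : nat := if x < y then 0%N else if x == y then 1%N else 2%N.

Lemma cmp_natE (x y x' y' : R) :
  (x < y) = (x' < y') -> (y < x) = (y' < x') -> cmp_nat x y = cmp_nat x' y'.
Proof. by move=> lt_xy lt_yx; rewrite /cmp_nat !eq_le !leNgt lt_xy lt_yx. Qed.

Lemma cmp_nat_mono (f : R -> R) (S : pred R) x y :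
  (forall a b, S a -> S b -> (f a < f b) = (a < b)) -> S x -> S y ->
  cmp_nat (f x) (f y) = cmp_nat x y.
Proof. by move=> fmono Sx Sy; apply: cmp_natE; apply: fmono. Qed.

Lemma cmp_nat_subr0 (k x y : R) : 0 < k -> cmp_nat (k * (x - y)) 0 = cmp_nat x y.
Proof.
by move=> k_gt0; apply: cmp_natE; rewrite ?pmulr_rlt0 ?pmulr_rgt0 ?subr_lt0 ?subr_gt0.
Qed.

Lemma card_sqr_eq (D : R) : [set m : R | m ^+ 2 = D] #= `I_(cmp_nat D 0).
Proof.
pose root (k : nat) : R := if k == 0%N then Num.sqrt D else - Num.sqrt D.
suff -> : [set m : R | m ^+ 2 = D] = root @` `I_(cmp_nat D 0).
  apply: inj_card_eq => i j; rewrite !inE /= /root /cmp_nat.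
  case: ltgtP => [//|D_gt0|]; last by case: i j => [|i] [|j].
  have sqrtD_gt0 : 0 < Num.sqrt D by rewrite sqrtr_gt0.
  by case: i => [|[|i]] //; case: j => [|[|j]] //= _ _ e; exfalso; lra.
rewrite /cmp_nat; case: ltgtP => [D_lt0|D_gt0|D0].
- rewrite II0 image_set0; apply/seteqP; split => // m /=.
  by have := sqr_ge0 m; lra.
- apply/seteqP; split => m /=.
    move=> mD; have : (m - Num.sqrt D) * (m + Num.sqrt D) = 0.
      by rewrite -subr_sqr sqr_sqrtr ?mD ?subrr //; lra.
    move/eqP; rewrite mulf_eq0 subr_eq0 addr_eq0 => /orP[/eqP->|/eqP->].
      by exists 0%N.
    by exists 1%N.
  by case=> k _ <-; rewrite /root; case: (k == 0%N); rewrite ?sqrrN sqr_sqrtr //; lra.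
- rewrite II1 image_set1 /root /= D0 sqrtr0; apply/seteqP; split => m /=.
    by move/eqP; rewrite sqrf_eq0 => /eqP.
  by move->; rewrite expr0n.
Qed.

End Trichotomy.

Section ChordReflection.
Variable R : realType.
Implicit Types (P A B : plane_pt R) (u v : R).

Definition dot A B : R := A.1 * B.1 + A.2 * B.2.

Lemma sqr_add_eq0 u v : u ^+ 2 + v ^+ 2 = 0 -> u = 0 /\ v = 0.
Proof.
by move/eqP; rewrite paddr_eq0 ?sqr_ge0 // !sqrf_eq0 => /andP[/eqP-> /eqP->].
Qed.

Lemma sqdist_eq0 A B : sqdist A B = 0 -> A = B.
Proof.
by case: A B => [a1 a2] [b1 b2]; rewrite /sqdist /= => /sqr_add_eq0[/subr0_eq-> /subr0_eq->].
Qed.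

Lemma sqdist_ge0 A B : 0 <= sqdist A B.
Proof. by rewrite addr_ge0 ?sqr_ge0. Qed.

Lemma sqdist_gt0 A B : A <> B -> 0 < sqdist A B.
Proof.
move=> nAB; rewrite lt_neqAle sqdist_ge0 andbT eq_sym.
by apply/eqP => /sqdist_eq0.
Qed.

Lemma inD_neq_onS1 P A : inD P -> onS1 A -> P <> A.
Proof. by rewrite /inD /onS1 => hP hA ePA; move: hP; rewrite ePA hA ltxx. Qed.

Lemma dot_lt1 A B : sqnorm A <= 1 -> inD B -> dot A B < 1.
Proof.
case: A B => [a1 a2] [b1 b2]; rewrite /inD /sqnorm /dot /= => hA hB.
have : 0 <= (a1 - b1) ^+ 2 + (a2 - b2) ^+ 2 by rewrite addr_ge0 ?sqr_ge0.
lra.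
Qed.

Lemma on_segment_sym A B P : on_segment A B P -> on_segment B A P.
Proof.
case=> t [/andP[t_ge0 t_le1] ->]; exists (1 - t); split; last by congr pair; ring.
by apply/andP; split; lra.
Qed.

(* The second point [A + k (P - A)] where the line through [A] and [P] meets
   the circle: [|A + k (P - A)|^2 = 1] is a quadratic in [k] with roots [0]
   and the [k] below. *)
Definition chord_end P A : plane_pt R :=
  let k := 2 * (1 - dot A P) / sqdist P A in
  (A.1 + k * (P.1 - A.1), A.2 + k * (P.2 - A.2)).

Section OnePoint.
Variables (P A : plane_pt R).
Hypotheses (hP : inD P) (hA : onS1 A).

Let PA_gt0 : 0 < sqdist P A. Proof. exact/sqdist_gt0/inD_neq_onS1. Qed.
Let dot_AP : dot A P < 1. Proof. by apply: dot_lt1; rewrite ?hA. Qed.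

Lemma chord_end_onS1 : onS1 (chord_end P A).
Proof.
move: hP hA PA_gt0 dot_AP.
case: P A => [x y] [a b]; rewrite /inD /onS1 /sqnorm /sqdist /dot /chord_end /= => _ hA' hd _.
set d := (x - a) ^+ 2 + (y - b) ^+ 2 in hd *.
set k := 2 * (1 - (a * x + b * y)) / d.
have hk : k * d = 2 * (1 - (a * x + b * y)) by rewrite /k; field; lra.
have hk2 : k * (k * d) = k * (2 * (1 - (a * x + b * y))) by rewrite hk.
have hAk : k * (a ^+ 2 + b ^+ 2) = k by rewrite hA' mulr1.
rewrite /d in hk hk2; lra.
Qed.

Lemma on_segment_chord_end : on_segment A (chord_end P A) P.
Proof.
move: hP hA PA_gt0 dot_AP.
case: P A => [x y] [a b]; rewrite /inD /onS1 /sqnorm /sqdist /dot /chord_end /= => hP' hA' hd h1.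
set d := (x - a) ^+ 2 + (y - b) ^+ 2 in hd *.
exists (d / (2 * (1 - (a * x + b * y)))); split.
  apply/andP; split; first by apply: divr_ge0; lra.
  by rewrite ler_pdivrMr; [rewrite /d; lra | lra].
by congr pair; rewrite /dot /sqdist /= -/d; field; lra.
Qed.

Lemma chord_end_neq : chord_end P A <> A.
Proof.
move=> eA; have := on_segment_chord_end; rewrite eA.
case=> t [_ eP]; apply: (inD_neq_onS1 hP hA); rewrite eP.
by case: (A) => a b /=; congr pair; ring.
Qed.

End OnePoint.

Lemma chord_end_unique P A B :
  inD P -> onS1 A -> onS1 B -> on_segment A B P -> B = chord_end P A.
Proof.
case: P A B => [x y] [a1 a2] [b1 b2].
rewrite /inD /onS1 /sqnorm /sqdist /dot /chord_end /= => hP hA hB [t [/andP[t0 t1] [ex ey]]].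
subst x y; move: hP; set X := (1 - t) * a1 + t * b1; set Y := (1 - t) * a2 + t * b2 => hP.
have t_neq0 : t != 0.
  by apply/eqP => t0'; move: hP; rewrite /X /Y t0' !subr0 !mul1r !mul0r !addr0; lra.
set e := (b1 - a1) ^+ 2 + (b2 - a2) ^+ 2.
have e_neq0 : e != 0.
  apply/eqP => /sqr_add_eq0[/subr0_eq e1 /subr0_eq e2].
  by move: hP; rewrite /X /Y e1 e2 -!mulrDl subrK !mul1r; lra.
have E1 : 1 - (a1 * X + a2 * Y) = t * e / 2.
  have hAt : t * (a1 ^+ 2 + a2 ^+ 2) = t by rewrite hA mulr1.
  have hBt : t * (b1 ^+ 2 + b2 ^+ 2) = t by rewrite hB mulr1.
  by rewrite /X /Y /e; lra.
have E2 : (X - a1) ^+ 2 + (Y - a2) ^+ 2 = t ^+ 2 * e by rewrite /X /Y /e; ring.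
by rewrite /dot /sqdist /= E1 E2 /X /Y; congr pair; field; apply/andP.
Qed.

Lemma chord_endK P A : inD P -> onS1 A -> chord_end P (chord_end P A) = A.
Proof.
move=> hP hA; apply/esym/chord_end_unique => //; first exact: chord_end_onS1.
exact/on_segment_sym/on_segment_chord_end.
Qed.

End ChordReflection.

Section CircleParametrization.
Variable R : realType.
Implicit Types (P A s t : plane_pt R).

(* [s] are homogeneous coordinates [(u : v)]; [circ_pt s] is [(u + i v)^2 / |u + i v|^2]. *)
Definition circ_pt s : plane_pt R :=
  ((s.1 ^+ 2 - s.2 ^+ 2) / sqnorm s, 2 * s.1 * s.2 / sqnorm s).

Definition cross s t : R := s.1 * t.2 - s.2 * t.1.

Lemma circ_pt_surj A : onS1 A -> exists2 s, 0 < sqnorm s & A = circ_pt s.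
Proof.
case: A => a b; rewrite /onS1 /circ_pt /sqnorm /= => hA.
have [a_eq|a_neq] := eqVneq a (-1).
  move: hA; rewrite a_eq sqrrN expr1n => hA.
  have -> : b = 0 by apply/eqP; rewrite -sqrf_eq0; apply/eqP; lra.
  by exists (0, 1); rewrite /= ?a_eq; [lra | congr pair; field].
have a_gtN1 : -1 < a by rewrite lt_neqAle eq_sym a_neq /=; nra.
exists (1 + a, b); rewrite /=; first lra.
have -> : (1 + a) ^+ 2 + b ^+ 2 = 2 * (1 + a) by lra.
by rewrite (_ : b ^+ 2 = 1 - a ^+ 2); [congr pair; field; lra | lra].
Qed.

Lemma sqdist_circ_pt s t : 0 < sqnorm s -> 0 < sqnorm t ->
  sqdist (circ_pt s) (circ_pt t) = 4 * cross s t ^+ 2 / (sqnorm s * sqnorm t).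
Proof.
by case: s t => [u1 v1] [u2 v2]; rewrite /sqdist /cross /circ_pt /sqnorm /= => hs ht; field; lra.
Qed.

Lemma circ_pt_eqE s t : 0 < sqnorm s -> 0 < sqnorm t ->
  circ_pt s = circ_pt t <-> cross s t = 0.
Proof.
move=> hs ht; have st_neq0 : sqnorm s * sqnorm t != 0 by rewrite mulf_neq0 ?gt_eqF.
split => [est|cst]; last first.
  by apply: sqdist_eq0; rewrite sqdist_circ_pt // cst expr0n /= mulr0 mul0r.
have := sqdist_circ_pt hs ht; rewrite est /sqdist !subrr expr0n /= addr0 => /esym/eqP.
by rewrite !mulf_eq0 invr_eq0 (negbTE st_neq0) pnatr_eq0 !orbF orbb => /eqP.
Qed.

(* [chord_end P] in the coordinates of [circ_pt]; this linear map has determinant [1 - |P|^2]. *)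
Definition chord_lin P s : plane_pt R :=
  (P.2 * s.1 - (1 + P.1) * s.2, (1 - P.1) * s.1 - P.2 * s.2).

Lemma sqnorm_chord_lin_gt0 P s : inD P -> 0 < sqnorm s -> 0 < sqnorm (chord_lin P s).
Proof.
case: P s => [x y] [u v]; rewrite /inD /sqnorm /chord_lin /= => hP hs.
rewrite lt_neqAle addr_ge0 ?sqr_ge0 // andbT eq_sym; apply/eqP => /sqr_add_eq0[e1 e2].
have hu : (1 - x ^+ 2 - y ^+ 2) * u = 0.
  rewrite (_ : _ * u = (1 + x) * ((1 - x) * u - y * v) - y * (y * u - (1 + x) * v)); last by ring.
  by rewrite e1 e2 !mulr0 subr0.
have hv : (1 - x ^+ 2 - y ^+ 2) * v = 0.
  rewrite (_ : _ * v = y * ((1 - x) * u - y * v) - (1 - x) * (y * u - (1 + x) * v)); last by ring.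
  by rewrite e1 e2 !mulr0 subr0.
have det_gt0 : 0 < 1 - x ^+ 2 - y ^+ 2 by lra.
move/eqP: hu; rewrite mulf_eq0 gt_eqF //= => /eqP u0.
move/eqP: hv; rewrite mulf_eq0 gt_eqF //= => /eqP v0.
by move: hs; rewrite u0 v0 expr0n addr0 ltxx.
Qed.

Lemma chord_end_circ_pt P s : inD P -> 0 < sqnorm s ->
  chord_end P (circ_pt s) = circ_pt (chord_lin P s).
Proof.
move=> hP hs; have := sqnorm_chord_lin_gt0 hP hs; move: hP hs.
case: P s => [x y] [u v]; rewrite /inD /chord_lin /circ_pt /chord_end /dot /sqdist /sqnorm /= => hP hs hH.
have E1 : 1 - ((u ^+ 2 - v ^+ 2) / (u ^+ 2 + v ^+ 2) * x + 2 * u * v / (u ^+ 2 + v ^+ 2) * y)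
   = ((1 - x) * u ^+ 2 + (1 + x) * v ^+ 2 - 2 * y * u * v) / (u ^+ 2 + v ^+ 2).
  by field; lra.
have E2 : (x - (u ^+ 2 - v ^+ 2) / (u ^+ 2 + v ^+ 2)) ^+ 2 + (y - 2 * u * v / (u ^+ 2 + v ^+ 2)) ^+ 2
   = ((y * u - (1 + x) * v) ^+ 2 + ((1 - x) * u - y * v) ^+ 2) / (u ^+ 2 + v ^+ 2).
  by field; lra.
by rewrite E1 E2; congr pair; field; lra.
Qed.

(* A linear map fixes the point [(u : v)] iff a linear equation holds at [circ_pt (u, v)]. *)
Lemma cross_lin_circ_pt (a b c d : R) s : 0 < sqnorm s ->
  cross (a * s.1 + b * s.2, c * s.1 + d * s.2) s =
  sqnorm s / 2 * (- (b + c) * (circ_pt s).1 + (a - d) * (circ_pt s).2 + (b - c)).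
Proof. by case: s => u v; rewrite /cross /circ_pt /sqnorm /= => hs; field; lra. Qed.

End CircleParametrization.

Section LineCircle.
Variables (R : realType) (al be ga : R).

Definition line_circle := [set X : plane_pt R | onS1 X /\ al * X.1 + be * X.2 + ga = 0].

Lemma card_line_circle : ~ [/\ al = 0, be = 0 & ga = 0] ->
  line_circle #= `I_(cmp_nat (al ^+ 2 + be ^+ 2 - ga ^+ 2) 0).
Proof.
move=> coef_neq0; have [a_gt0|a_le0] := ltP 0 (al ^+ 2 + be ^+ 2); last first.
  have /sqr_add_eq0[al0 be0] : al ^+ 2 + be ^+ 2 = 0.
    by apply/eqP; rewrite eq_le a_le0 addr_ge0 ?sqr_ge0.
  have ga_neq0 : ga != 0 by apply/eqP => ga0; apply: coef_neq0.
  rewrite /cmp_nat al0 be0 expr0n /= add0r sub0r oppr_lt0 exprn_even_gt0 // ga_neq0.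
  rewrite II0 card_eq0; apply/eqP/seteqP; split => // X [_].
  by rewrite al0 be0 !mul0r !add0r => /eqP; rewrite (negbTE ga_neq0).
pose a := al ^+ 2 + be ^+ 2.
(* [m] is the coordinate along the line, in the direction [(- be, al)] *)
pose pt (m : R) : plane_pt R := ((- al * ga - be * m) / a, (- be * ga + al * m) / a).
have ptK m : al * (pt m).2 - be * (pt m).1 = m by rewrite /= /a; field; lra.
suff -> : line_circle = pt @` [set m | m ^+ 2 = a - ga ^+ 2].
  by apply: card_eq_trans (inj_card_eq _) (card_sqr_eq _) => m1 m2 _ _ e; rewrite -(ptK m1) e ptK.
apply/seteqP; split => [X [hX lX]|_ [m mD <-]]; last first.
  split; last by rewrite /= /a; field; lra.
  rewrite /onS1; have -> : sqnorm (pt m) = (ga ^+ 2 + m ^+ 2) / a by rewrite /sqnorm /= /a; field; lra.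
  by rewrite mD /a; field; lra.
exists (al * X.2 - be * X.1).
  move: hX; rewrite /onS1 /sqnorm /= /a => hX.
  rewrite (_ : _ ^+ 2 = (al ^+ 2 + be ^+ 2) * (X.1 ^+ 2 + X.2 ^+ 2) - (al * X.1 + be * X.2) ^+ 2).
    by rewrite hX mulr1 (_ : al * X.1 + be * X.2 = - ga) ?sqrrN; lra.
  by ring.
case: X lX {hX} => x y /= lX.
rewrite /pt /a /= (_ : ga = - (al * x + be * y)); last lra.
by congr pair; field; lra.
Qed.

End LineCircle.

Section TripleReflection.
Variables (R : realType) (P Q R0 : plane_pt R).

Definition triple_refl (A : plane_pt R) := chord_end R0 (chord_end Q (chord_end P A)).
Definition triple_lin (s : plane_pt R) := chord_lin R0 (chord_lin Q (chord_lin P s)).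

Definition fix_al := - ((triple_lin (0, 1)).1 + (triple_lin (1, 0)).2).
Definition fix_be := (triple_lin (1, 0)).1 - (triple_lin (0, 1)).2.
Definition fix_ga := (triple_lin (0, 1)).1 - (triple_lin (1, 0)).2.

Definition area2 := (Q.1 - P.1) * (R0.2 - P.2) - (Q.2 - P.2) * (R0.1 - P.1).
Definition disk_prod := (1 - sqnorm P) * (1 - sqnorm Q) * (1 - sqnorm R0).

Lemma triple_linE s : triple_lin s =
  ((triple_lin (1, 0)).1 * s.1 + (triple_lin (0, 1)).1 * s.2,
   (triple_lin (1, 0)).2 * s.1 + (triple_lin (0, 1)).2 * s.2).
Proof.
case: s P Q R0 => [u v] [x1 y1] [x2 y2] [x3 y3].
by rewrite /triple_lin /chord_lin /=; congr pair; ring.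
Qed.

Lemma fix_discE : fix_al ^+ 2 + fix_be ^+ 2 - fix_ga ^+ 2 = 4 * (area2 ^+ 2 - disk_prod).
Proof.
rewrite /fix_al /fix_be /fix_ga /area2 /disk_prod /triple_lin /chord_lin /sqnorm.
by case: P Q R0 => [x1 y1] [x2 y2] [x3 y3] /=; ring.
Qed.

Hypotheses (hP : inD P) (hQ : inD Q) (hR : inD R0).

Lemma fix_coef_neq0 : ~ [/\ fix_al = 0, fix_be = 0 & fix_ga = 0].
Proof.
(* were [triple_lin] scalar, this functional would vanish on its matrix *)
have trace : R0.2 * (triple_lin (1, 0)).1 - (1 + R0.1) * (triple_lin (1, 0)).2
    + (1 - R0.1) * (triple_lin (0, 1)).1 - R0.2 * (triple_lin (0, 1)).2
    = 2 * (1 - sqnorm R0) * (1 - dot P Q).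
  rewrite /triple_lin /chord_lin /sqnorm /dot.
  by case: P Q R0 => [x1 y1] [x2 y2] [x3 y3] /=; ring.
have trace_gt0 : 0 < 2 * (1 - sqnorm R0) * (1 - dot P Q).
  by rewrite !mulr_gt0 // subr_gt0 //; apply/dot_lt1/hQ/ltW.
rewrite /fix_al /fix_be /fix_ga; move: trace trace_gt0.
case: (triple_lin (1, 0)) => a c; case: (triple_lin (0, 1)) => b d /= trace.
rewrite -trace => + [al0 be0 ga0].
have b0 : b = 0 by lra.
have c0 : c = 0 by lra.
have -> : d = a by lra.
by rewrite b0 c0 !mulr0 subr0 addr0 subrr ltxx.
Qed.

Lemma triple_refl_fixE A : onS1 A ->
  triple_refl A = A <-> fix_al * A.1 + fix_be * A.2 + fix_ga = 0.
Proof.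
move=> hA; have [s hs ->] := circ_pt_surj hA.
have h1 := sqnorm_chord_lin_gt0 hP hs.
have h2 := sqnorm_chord_lin_gt0 hQ h1.
have h3 := sqnorm_chord_lin_gt0 hR h2.
rewrite /triple_refl !chord_end_circ_pt // circ_pt_eqE // -/(triple_lin s) triple_linE.
rewrite cross_lin_circ_pt // /fix_al /fix_be /fix_ga.
split => [/eqP|->]; last by rewrite mulr0.
by rewrite mulf_eq0 mulf_eq0 invr_eq0 pnatr_eq0 orbF gt_eqF //= => /eqP.
Qed.

Definition triangle_of (A : plane_pt R) : set (plane_pt R) :=
  [set A; chord_end P A; chord_end Q (chord_end P A)].

Lemma triangle_ofP A X : triangle_of A X <->
  X = A \/ X = chord_end P A \/ X = chord_end Q (chord_end P A).
Proof. by rewrite /triangle_of /=; split; tauto. Qed.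

Definition triple_fix := [set A : plane_pt R | onS1 A /\ triple_refl A = A].

Lemma triple_fixE : triple_fix = line_circle fix_al fix_be fix_ga.
Proof. by apply/seteqP; split => A [hA fixA]; split => //; apply/triple_refl_fixE. Qed.

Lemma triple_fix_vertices A : triple_fix A ->
  [/\ onS1 (chord_end P A), onS1 (chord_end Q (chord_end P A)), chord_end P A <> A,
      chord_end Q (chord_end P A) <> chord_end P A & chord_end Q (chord_end P A) <> A].
Proof.
case=> hA fixA; have hB := chord_end_onS1 hP hA; have hC := chord_end_onS1 hQ hB.
split => //; [exact: chord_end_neq | exact: chord_end_neq |].
by move=> eCA; apply: (chord_end_neq hR hC); rewrite {2}eCA; exact: fixA.
Qed.

Lemma circ_inscribed_trianglesE :
  circ_inscribed_triangles P Q R0 = triangle_of @` triple_fix.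
Proof.
apply/seteqP; split.
  move=> T [A [B [C [[hA hB hC] [_ [-> [sAB sBC sCA]]]]]]].
  have eB := chord_end_unique hP hA hB sAB.
  have eC := chord_end_unique hQ hB hC sBC.
  have eA := chord_end_unique hR hC hA sCA.
  by exists A; [split; rewrite // /triple_refl -eB -eC | rewrite /triangle_of -eB -eC].
move=> _ [A fixA <-]; have [hB hC nBA nCB nCA] := triple_fix_vertices fixA.
case: fixA => hA fixA.
exists A, (chord_end P A), (chord_end Q (chord_end P A)).
split; first by split.
split; first by split; [move/esym | move/esym | ].
split => //; split; [exact: on_segment_chord_end | exact: on_segment_chord_end |].
by have := on_segment_chord_end hR hC; rewrite -/(triple_refl A) fixA.
Qed.

Lemma triangle_of_inj : {in triple_fix &, injective triangle_of}.
Proof.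
move=> A A'; rewrite !inE => fixA fixA' eT.
have [hB hC nBA nCB nCA] := triple_fix_vertices fixA.
have [hB' hC' nBA' nCB' nCA'] := triple_fix_vertices fixA'.
have hA := fixA.1; have hA' := fixA'.1.
have /triangle_ofP mB' : triangle_of A (chord_end P A').
  by rewrite eT; apply/triangle_ofP; right; left.
have /triangle_ofP mC' : triangle_of A (chord_end Q (chord_end P A')).
  by rewrite eT; apply/triangle_ofP; right; right.
have /triangle_ofP[//|[eA'|eA']] : triangle_of A A' by rewrite eT; apply/triangle_ofP; left.
- have eB' : chord_end P A' = A by rewrite eA' chord_endK.
  rewrite eB' in mC' nCB' nCA'; case: mC' => [//|[eC'|eC']].
  + by case: nCA'; rewrite eC' eA'.
  + by case: nBA; rewrite -[chord_end P A](chord_endK hQ hB) -eC' chord_endK.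
- case: mB' => [eB'|[eB'|eB']].
  + by case: nCB; rewrite -eA' -eB' chord_endK // eA'.
  + by case: nCA; rewrite -eA' -[A'](chord_endK hP hA') eB' chord_endK.
  + by case: nBA'; rewrite eB' eA'.
Qed.

Lemma card_circ_inscribed_triangles :
  circ_inscribed_triangles P Q R0 #= line_circle fix_al fix_be fix_ga.
Proof. by rewrite circ_inscribed_trianglesE -triple_fixE; apply: inj_card_eq triangle_of_inj. Qed.

End TripleReflection.

Section KleinDistance.
Variable R : realType.
Implicit Types (X Y : plane_pt R) (a b c : R).

Definition coshK X Y : R :=
  (1 - dot X Y) / (Num.sqrt (1 - sqnorm X) * Num.sqrt (1 - sqnorm Y)).

Lemma dK_arccosh X Y : inD X -> inD Y -> dK X Y = arccosh (coshK X Y).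
Proof.
rewrite /dK /dP /coshK /Ginv.
case: X Y => [x1 x2] [y1 y2]; rewrite /inD /sqdist /dot /sqnorm /= => hX hY.
set s := Num.sqrt (1 - (x1 ^+ 2 + x2 ^+ 2)); set t := Num.sqrt (1 - (y1 ^+ 2 + y2 ^+ 2)).
have s_gt0 : 0 < s by rewrite sqrtr_gt0; lra.
have t_gt0 : 0 < t by rewrite sqrtr_gt0; lra.
have hs : x1 ^+ 2 + x2 ^+ 2 = 1 - s ^+ 2 by rewrite sqr_sqrtr; lra.
have ht : y1 ^+ 2 + y2 ^+ 2 = 1 - t ^+ 2 by rewrite sqr_sqrtr; lra.
congr arccosh.
have E1 : (x1 / (1 + s)) ^+ 2 + (x2 / (1 + s)) ^+ 2 = (1 - s ^+ 2) / (1 + s) ^+ 2.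
  by rewrite -hs; field; lra.
have E2 : (y1 / (1 + t)) ^+ 2 + (y2 / (1 + t)) ^+ 2 = (1 - t ^+ 2) / (1 + t) ^+ 2.
  by rewrite -ht; field; lra.
have E3 : (x1 / (1 + s) - y1 / (1 + t)) ^+ 2 + (x2 / (1 + s) - y2 / (1 + t)) ^+ 2
   = (1 - s ^+ 2) / (1 + s) ^+ 2 - 2 * (x1 * y1 + x2 * y2) / ((1 + s) * (1 + t))
     + (1 - t ^+ 2) / (1 + t) ^+ 2.
  by rewrite -hs -ht; field; lra.
by rewrite E1 E2 E3; field; lra.
Qed.

Lemma coshK_gt0 X Y : inD X -> inD Y -> 0 < coshK X Y.
Proof.
move=> hX hY; rewrite /coshK divr_gt0 ?subr_gt0 ?dot_lt1 ?ltW //.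
by rewrite mulr_gt0 // sqrtr_gt0 subr_gt0.
Qed.

Lemma sqr_coshK X Y : inD X -> inD Y ->
  coshK X Y ^+ 2 = (1 - dot X Y) ^+ 2 / ((1 - sqnorm X) * (1 - sqnorm Y)).
Proof.
by move=> hX hY; rewrite /coshK expr_div_n exprMn !sqr_sqrtr // subr_ge0 ltW.
Qed.

Lemma arccosh_ltE a b : 1 <= a -> 1 <= b -> (arccosh a < arccosh b) = (a < b).
Proof.
have sqrt_le u v : 1 <= u -> u <= v -> Num.sqrt (u ^+ 2 - 1) <= Num.sqrt (v ^+ 2 - 1).
  by move=> hu huv; rewrite ler_wsqrtr // lerB // ler_pXn2r // nnegrE; lra.
move=> ha hb; have hpos u : 1 <= u -> 0 < u + Num.sqrt (u ^+ 2 - 1).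
  by move=> hu; rewrite ltr_wpDr ?sqrtr_ge0 //; lra.
rewrite /arccosh ltr_ln ?posrE ?hpos //.
apply/idP/idP => [|ab]; last by rewrite ltr_leD // sqrt_le // ltW.
by apply: contraTT; rewrite -!leNgt => ba; rewrite lerD // sqrt_le.
Qed.

Lemma expR_arccosh c : 1 <= c -> expR (arccosh c) = c + Num.sqrt (c ^+ 2 - 1).
Proof. by move=> hc; rewrite /arccosh lnK // posrE ltr_wpDr ?sqrtr_ge0 //; lra. Qed.

(* [ln coth (d / 2) = arccosh (coth d)] for [d = arccosh c] *)
Lemma ln_coth_arccosh c : 1 < c ->
  ln ((expR (arccosh c) + 1) / (expR (arccosh c) - 1)) = arccosh (c / Num.sqrt (c ^+ 2 - 1)).
Proof.
move=> hc; set h := Num.sqrt (c ^+ 2 - 1).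
have h_gt0 : 0 < h by rewrite sqrtr_gt0; nra.
have h2 : h ^+ 2 = c ^+ 2 - 1 by rewrite sqr_sqrtr //; nra.
rewrite expR_arccosh ?ltW // -/h /arccosh.
have -> : (c / h) ^+ 2 - 1 = h^-1 ^+ 2.
  by rewrite expr_div_n (_ : c ^+ 2 = h ^+ 2 + 1); [field; lra | lra].
rewrite sqrtr_sqr ger0_norm ?invr_ge0 ?ltW //; congr ln.
have cross : h * (c + h + 1) = (c + 1) * (c + h - 1) by nra.
rewrite (_ : _ / _ = h * (c + h + 1) / (h * (c + h - 1))); last by field; lra.
by rewrite cross; field; lra.
Qed.

Lemma cmp_nat_arccosh_coth c0 c : 1 <= c0 -> 1 < c ->
  cmp_nat (arccosh c0) (ln ((expR (arccosh c) + 1) / (expR (arccosh c) - 1))) =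
  cmp_nat ((c0 ^+ 2 - 1) * (c ^+ 2 - 1)) 1.
Proof.
move=> hc0 hc; set h := Num.sqrt (c ^+ 2 - 1).
have h_gt0 : 0 < h by rewrite sqrtr_gt0; nra.
have h2 : h ^+ 2 = c ^+ 2 - 1 by rewrite sqr_sqrtr //; nra.
rewrite ln_coth_arccosh // (@cmp_nat_mono _ (@arccosh R) (>= 1)) //; last first.
- by rewrite /= ler_pdivlMr // mul1r -/h; nra.
- exact: arccosh_ltE.
rewrite (@cmp_natE _ c0 (c / h) (c0 * h) c) ?ltr_pdivlMr ?ltr_pdivrMr //.
rewrite -(@cmp_nat_mono _ (fun x => x ^+ 2) (>= 0)) /=; last 3 first.
- by move=> a b ha hb; rewrite ltr_pXn2r.
- by rewrite mulr_ge0 // ?ltW //; lra.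
- by lra.
by apply: cmp_natE; rewrite exprMn h2; apply/idP/idP; lra.
Qed.

End KleinDistance.

Section BinaryForm.
Variables (R : comRingType) (p r q : R).

Definition bform (s t : R * R) : R := p * s.1 * t.1 + r * (s.1 * t.2 + s.2 * t.1) + q * s.2 * t.2.

Lemma bform_lagrange s t :
  bform s t ^+ 2 - bform s s * bform t t = (r ^+ 2 - p * q) * (s.1 * t.2 - s.2 * t.1) ^+ 2.
Proof. by rewrite /bform; ring. Qed.

End BinaryForm.

(* The Minkowski form on the lifts [(x, y, 1)] of points of the plane. *)
Definition lor (R : realType) (X Y : plane_pt R) : R := dot X Y - 1.

Lemma lorXX (R : realType) (X : plane_pt R) : lor X X = - (1 - sqnorm X).
Proof. by rewrite /lor /dot /sqnorm -!expr2; ring. Qed.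

Lemma lor_lt0 (R : realType) (X : plane_pt R) : inD X -> lor X X < 0.
Proof. by rewrite lorXX oppr_lt0 subr_gt0. Qed.

Section DistanceToLine.
Variables (R : realType) (P Q R0 : plane_pt R).
Hypotheses (hP : inD P) (hQ : inD Q) (hR : inD R0) (area2_neq0 : area2 P Q R0 != 0).

Definition line_pt (t : R) : plane_pt R := (P.1 + t * (Q.1 - P.1), P.2 + t * (Q.2 - P.2)).

Definition gram_det : R := lor P Q ^+ 2 - lor P P * lor Q Q.

(* coordinates, in the basis [(P, Q)], of the projection of [R0] on the plane of [P] and [Q] *)
Definition proj_coef : R * R :=
  ((lor R0 Q * lor P Q - lor R0 P * lor Q Q) / gram_det,
   (lor R0 P * lor P Q - lor R0 Q * lor P P) / gram_det).

Definition perp_sq : R := lor R0 R0 - (proj_coef.1 * lor R0 P + proj_coef.2 * lor R0 Q).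

Definition foot : plane_pt R := line_pt (proj_coef.2 / (proj_coef.1 + proj_coef.2)).

Local Notation g := (@bform R (lor P P) (lor P Q) (lor Q Q)).

Lemma lor_line_pt t : lor R0 (line_pt t) = (1 - t) * lor R0 P + t * lor R0 Q.
Proof. by rewrite /line_pt /lor /dot; case: P Q R0 => [a1 a2] [b1 b2] [c1 c2] /=; ring. Qed.

Lemma lor_line_pt2 t : lor (line_pt t) (line_pt t) = g (1 - t, t) (1 - t, t).
Proof. by rewrite /line_pt /bform /lor /dot; case: P Q => [a1 a2] [b1 b2] /=; ring. Qed.

Lemma gram_det_gt0 : 0 < gram_det.
Proof.
have PQ_gt0 : 0 < sqdist P Q.
  apply: sqdist_gt0 => ePQ; move: area2_neq0; rewrite /area2 ePQ.
  by rewrite !subrr !mul0r subrr eqxx.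
have -> : gram_det = sqdist P Q * (1 - sqnorm P) + (dot P Q - sqnorm P) ^+ 2.
  by rewrite /gram_det /lor /sqdist /sqnorm /dot; case: P Q => [a1 a2] [b1 b2] /=; ring.
by rewrite ltr_pwDl ?sqr_ge0 // mulr_gt0 // subr_gt0.
Qed.

Let gram_det_neq0 : gram_det != 0. Proof. by rewrite gt_eqF // gram_det_gt0. Qed.

Lemma bform_proj_coef s : g proj_coef s = s.1 * lor R0 P + s.2 * lor R0 Q.
Proof. by move: gram_det_neq0; rewrite /bform /proj_coef /gram_det /= => ?; field. Qed.

Lemma perp_sq_gram : perp_sq * gram_det = area2 P Q R0 ^+ 2.
Proof.
move: gram_det_neq0; rewrite /perp_sq /proj_coef /gram_det /area2 /lor /dot.
by case: P Q R0 => [a1 a2] [b1 b2] [c1 c2] /= ?; field.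
Qed.

Lemma perp_sq_gt0 : 0 < perp_sq.
Proof.
rewrite (_ : perp_sq = area2 P Q R0 ^+ 2 / gram_det); last by rewrite -perp_sq_gram mulfK.
by rewrite divr_gt0 ?gram_det_gt0 // exprn_even_gt0.
Qed.

Lemma sqr_coshK_ge t : inD (line_pt t) -> 1 - perp_sq / lor R0 R0 <= coshK R0 (line_pt t) ^+ 2.
Proof.
move=> hS; rewrite sqr_coshK //.
rewrite (_ : (1 - dot R0 _) ^+ 2 = lor R0 (line_pt t) ^+ 2); last by rewrite /lor; ring.
rewrite (_ : (1 - sqnorm R0) * _ = lor R0 R0 * lor (line_pt t) (line_pt t)); last first.
  by rewrite /lor /dot /sqnorm -!expr2; ring.
have hSS := lor_lt0 hS; have hRR := lor_lt0 hR.
rewrite ler_pdivlMr ?nmulr_rgt0 //.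
(* reverse Cauchy-Schwarz: the form is indefinite on the plane of [P] and [Q] *)
have := bform_lagrange (lor P P) (lor P Q) (lor Q Q) proj_coef (1 - t, t).
rewrite -/gram_det bform_proj_coef -lor_line_pt -lor_line_pt2 [(1 - t, t).1]/= [(1 - t, t).2]/=.
rewrite (_ : g proj_coef proj_coef = lor R0 R0 - perp_sq); last first.
  by rewrite bform_proj_coef /perp_sq; ring.
have := mulr_ge0 (ltW gram_det_gt0) (sqr_ge0 (proj_coef.1 * t - proj_coef.2 * (1 - t))).
rewrite (_ : (1 - perp_sq / lor R0 R0) * _ = (lor R0 R0 - perp_sq) * lor (line_pt t) (line_pt t)).
  by lra.
by field; rewrite lt_eqF.
Qed.

Lemma proj_coef_sum_neq0 : proj_coef.1 + proj_coef.2 != 0.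
Proof.
apply/eqP => sum0; have := perp_sq_gt0.
have : g proj_coef proj_coef = proj_coef.1 ^+ 2 * sqdist P Q.
  rewrite /bform (_ : proj_coef.2 = - proj_coef.1); last lra.
  by rewrite /lor /sqdist /sqnorm /dot; case: P Q => [a1 a2] [b1 b2] /=; ring.
rewrite bform_proj_coef (_ : _ * lor R0 P + _ = lor R0 R0 - perp_sq); last by rewrite /perp_sq; ring.
have := lor_lt0 hR; have := mulr_ge0 (sqr_ge0 proj_coef.1) (sqdist_ge0 P Q).
lra.
Qed.

Lemma lor_foot : lor foot foot = (lor R0 R0 - perp_sq) / (proj_coef.1 + proj_coef.2) ^+ 2.
Proof.
rewrite /foot lor_line_pt2 (_ : lor R0 R0 - perp_sq = g proj_coef proj_coef); last first.
  by rewrite bform_proj_coef /perp_sq; ring.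
by move: proj_coef_sum_neq0; case: proj_coef => x1 x2 /= ?; rewrite /bform /=; field.
Qed.

Lemma foot_inD : inD foot.
Proof.
have : lor foot foot < 0.
  rewrite lor_foot pmulr_llt0 ?invr_gt0 ?exprn_even_gt0 ?proj_coef_sum_neq0 //.
  by have := lor_lt0 hR; have := perp_sq_gt0; lra.
by rewrite /inD /lor /dot /sqnorm -!expr2; lra.
Qed.

Lemma sqr_coshK_foot : coshK R0 foot ^+ 2 = 1 - perp_sq / lor R0 R0.
Proof.
have sum_neq0 := proj_coef_sum_neq0; have hRR := lor_lt0 hR.
rewrite (sqr_coshK hR foot_inD).
rewrite (_ : (1 - dot R0 _) ^+ 2 = lor R0 foot ^+ 2); last by rewrite /lor; ring.
rewrite (_ : (1 - sqnorm R0) * _ = lor R0 R0 * lor foot foot); last first.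
  by rewrite /lor /dot /sqnorm -!expr2; ring.
rewrite lor_foot {1}/foot lor_line_pt.
rewrite (_ : _ * lor R0 P + _ = (lor R0 R0 - perp_sq) / (proj_coef.1 + proj_coef.2)); last first.
  by rewrite /perp_sq; field.
have hRP : lor R0 R0 - perp_sq != 0 by rewrite lt_eqF //; have := perp_sq_gt0; lra.
by field; rewrite lt_eqF // sum_neq0 hRP.
Qed.

Lemma coshK_foot_ge1 : 1 <= coshK R0 foot.
Proof.
have c_gt0 := coshK_gt0 hR foot_inD; have := sqr_coshK_foot.
have : 0 <= - (perp_sq / lor R0 R0).
  by rewrite oppr_ge0 pmulr_rle0 ?perp_sq_gt0 // invr_le0 ltW // lor_lt0.
nra.
Qed.

Lemma deltaK_foot : deltaK P Q R0 = arccosh (coshK R0 foot).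
Proof.
have c0_ge1 := coshK_foot_ge1.
set E := [set dK R0 S | S in [set S | inD S /\ on_line P Q S]].
have E_foot : E (arccosh (coshK R0 foot)).
  exists foot; last by rewrite (dK_arccosh hR foot_inD).
  by split; [exact: foot_inD | exists (proj_coef.2 / (proj_coef.1 + proj_coef.2))].
have E_lb : lbound E (arccosh (coshK R0 foot)).
  move=> _ [S [hS [t eS]] <-]; subst S; rewrite -/(line_pt t) in hS *.
  have c_gt0 := coshK_gt0 hR hS; have c0_gt0 := coshK_gt0 hR foot_inD.
  have := sqr_coshK_ge hS; rewrite -sqr_coshK_foot => c0_le.
  rewrite dK_arccosh // leNgt arccosh_ltE //; last by nra.
  by rewrite -leNgt; nra.
apply/eqP; rewrite eq_le; apply/andP; split.
  by apply: ge_inf => //; exists (arccosh (coshK R0 foot)).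
by apply: lb_le_inf => //; exists (arccosh (coshK R0 foot)).
Qed.

Lemma sqr_coshK_PQ : coshK P Q ^+ 2 - 1 = gram_det / (lor P P * lor Q Q).
Proof.
rewrite sqr_coshK // /gram_det /lor.
have := lor_lt0 hP; have := lor_lt0 hQ; rewrite /lor /dot /sqnorm -!expr2 => ? ?.
by field; apply/andP; split; lra.
Qed.

Lemma coshK_PQ_gt1 : 1 < coshK P Q.
Proof.
have c_gt0 := coshK_gt0 hP hQ; have := sqr_coshK_PQ.
have : 0 < gram_det / (lor P P * lor Q Q).
  by rewrite divr_gt0 ?gram_det_gt0 // nmulr_rgt0 ?lor_lt0.
nra.
Qed.

Lemma coshK_prod :
  (coshK R0 foot ^+ 2 - 1) * (coshK P Q ^+ 2 - 1) = area2 P Q R0 ^+ 2 / disk_prod P Q R0.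
Proof.
have nz X : inD X -> 1 - sqnorm X != 0 by rewrite subr_eq0 eq_sym => /lt_eqF ->.
rewrite sqr_coshK_PQ sqr_coshK_foot -perp_sq_gram /disk_prod !lorXX.
by field; rewrite !nz.
Qed.

Lemma cmp_nat_deltaK :
  cmp_nat (deltaK P Q R0) (DeltaK P Q) = cmp_nat (area2 P Q R0 ^+ 2) (disk_prod P Q R0).
Proof.
have prod_gt0 : 0 < disk_prod P Q R0.
  by rewrite /disk_prod !mulr_gt0 // subr_gt0.
rewrite /DeltaK deltaK_foot dK_arccosh // cmp_nat_arccosh_coth ?coshK_foot_ge1 ?coshK_PQ_gt1 //.
by rewrite coshK_prod; apply: cmp_natE; rewrite ?ltr_pdivlMr ?ltr_pdivrMr // mul1r.
Qed.

End DistanceToLine.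

Lemma area2_neq0 (R : realType) (P Q R0 : plane_pt R) : ~ collinear P Q R0 -> area2 P Q R0 != 0.
Proof.
move=> ncol; apply/negP => /eqP area0; apply: ncol.
have normal a b : a != 0 \/ b != 0 -> a * (Q.1 - P.1) + b * (Q.2 - P.2) = 0 ->
    a * (R0.1 - P.1) + b * (R0.2 - P.2) = 0 -> collinear P Q R0.
  by move=> ab hQ hR; exists a, b, (a * P.1 + b * P.2); split => //; split => //; split; lra.
move: area0; rewrite /area2 => area0.
have [PQ1|] := eqVneq (Q.1 - P.1) 0; last first.
  by move=> ?; apply: (normal (Q.2 - P.2) (- (Q.1 - P.1))); [right; rewrite oppr_eq0 | ring | lra].
have [PQ2|] := eqVneq (Q.2 - P.2) 0; last first.
  by move=> ?; apply: (normal (Q.2 - P.2) (- (Q.1 - P.1))); [left | ring | lra].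
have [PR1|] := eqVneq (R0.1 - P.1) 0; last first.
  move=> ?; apply: (normal (R0.2 - P.2) (- (R0.1 - P.1))); last by ring.
    by right; rewrite oppr_eq0.
  by rewrite PQ1 PQ2; ring.
have [PR2|] := eqVneq (R0.2 - P.2) 0; last first.
  by move=> ?; apply: (normal (R0.2 - P.2) (- (R0.1 - P.1))); [by left | rewrite PQ1 PQ2; ring | ring].
by apply: (normal 1 0); [left; rewrite oner_eq0 | rewrite PQ1 PQ2; ring | rewrite PR1 PR2; ring].
Qed.

Theorem theorem3p1 (R : realType) (P Q R0 : plane_pt R) :
  inD P -> inD Q -> inD R0 -> ~ collinear P Q R0 ->
  (card_eq (circ_inscribed_triangles P Q R0)
     `I_(if (deltaK P Q R0 < DeltaK P Q)%R then 0%N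
         else if (deltaK P Q R0 == DeltaK P Q)%R then 1%N else 2%N)).
Proof.
move=> hP hQ hR ncol.
change (circ_inscribed_triangles P Q R0 #= `I_(cmp_nat (deltaK P Q R0) (DeltaK P Q))).
rewrite cmp_nat_deltaK ?area2_neq0 // -(@cmp_nat_subr0 _ 4) // -fix_discE.
apply: card_eq_trans (card_circ_inscribed_triangles hP hQ hR) _.
exact/card_line_circle/fix_coef_neq0.
Qed.
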